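(* Every light confluent epimorphism between rooted trees is a composition of elementary light confluent epimorphisms.
   Context: A graph is a pair $(V,E)$ with $E\subseteq V^2$ reflexive and symmetric; a tree is a finite graph in which any two distinct vertices are joined by a unique sequence of pairwise distinct vertices with consecutive ones adjacent. A rooted tree is a tree with a distinguished root $r$; $x\le y$ iff the path from $r$ to $y$ contains $x$. Epimorphisms between rooted trees: vertex maps sending edges to edges, surjective on vertices and edges, root to root, order-preserving. Connected sets: not a union of two nonempty disjoint sets with no edges between; components are maximal connected subsets; for a vertex $v$, $G\setminus\{v\}$ denotes the induced subgraph on the remaining vertices. Confluent: for each connected $Q$ of the target, every component $K$ of $f^{-1}(Q)$ has $f(K)=Q$. Light: distinct vertices with the same image are never adjacent. An epimorphism $f\colon G\to H$ between rooted trees is elementary light confluent if there are a vertex $v\in G$ and two distinct components $C_1,C_2$ of $G\setminus\{v\}$ such that $f|_{C_1}$ and $f|_{C_2}$ are injective, $f(C_1)=f(C_2)$ is a component of $H\setminus\{f(v)\}$, and $f$ restricted to $G\setminus(C_1\cup C_2)$ is injective. *)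

From mathcomp Require Import all_boot.
Set Implicit Arguments. Unset Strict Implicit. Unset Printing Implicit Defensive.

Definition is_gpath (V : finType) (E : rel V) (x y : V) (s : seq V) : Prop :=
  exists p, s = x :: p /\ path E x p /\ last x p = y /\ uniq s.

Record rtree : Type := RTree {
  vtx :> finType;
  adj : rel vtx;
  root : vtx;
  adj_refl : forall x, adj x x;
  adj_sym : forall x y, adj x y = adj y x;
  tree_ax : forall x y, x <> y ->
    (exists s, is_gpath adj x y s) /\
    (forall s1 s2, is_gpath adj x y s1 -> is_gpath adj x y s2 -> s1 = s2)
}.

Definition tle (T : rtree) (x y : T) : Prop :=
  exists s, is_gpath (@adj T) (root T) y s /\ x \in s.

Definition epimorphism (G H : rtree) (f : G -> H) : Prop :=
  [/\ (forall x y, adj x y -> adj (f x) (f y)),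
      (forall w : H, exists v : G, f v = w),
      (forall a b : H, adj a b -> exists x y : G, [/\ adj x y, f x = a & f y = b]),
      f (root G) = root H
    & (forall x y : G, tle x y -> tle (f x) (f y))].

Definition connected (T : rtree) (A : {set T}) : Prop :=
  ~ exists B C : {set T},
      [/\ B != set0, C != set0, [disjoint B & C], A = B :|: C
        & forall b c, b \in B -> c \in C -> ~~ adj b c].

Definition component (T : rtree) (A K : {set T}) : Prop :=
  [/\ K \subset A, connected K
    & forall K' : {set T}, K \subset K' -> K' \subset A -> connected K' -> K' = K].

Definition confluent (G H : rtree) (f : G -> H) : Prop :=
  forall Q : {set H}, connected Q ->
    forall K : {set G}, component (f @^-1: Q) K -> f @: K = Q.

Definition light (G H : rtree) (f : G -> H) : Prop :=
  forall x y : G, x <> y -> f x = f y -> ~~ adj x y.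

(* Components of G \ {v}: connectedness of a vertex set only depends on the
   edges among its vertices, so components of the induced subgraph on
   V \ {v} are the components of the set [set~ v]. *)
Definition elementary_lc (G H : rtree) (f : G -> H) : Prop :=
  epimorphism f /\
  exists (v : G) (C1 C2 : {set G}),
    component [set~ v] C1 /\ component [set~ v] C2 /\ C1 <> C2 /\
    {in C1 &, injective f} /\ {in C2 &, injective f} /\
    f @: C1 = f @: C2 /\ component [set~ f v] (f @: C1) /\
    {in ~: (C1 :|: C2) &, injective f}.

Inductive elem_comp : forall G H : rtree, (G -> H) -> Prop :=
  | ec_one (G H : rtree) (f : G -> H) : elementary_lc f -> elem_comp f
  | ec_step (G K H : rtree) (f : G -> K) (g : K -> H) (h : G -> H) :
      elementary_lc f -> elem_comp g -> (forall x, h x = g (f x)) -> elem_comp h.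

(* Light confluent epimorphisms of rooted trees are exactly the maps that
   commute with the parent function, send only the root to the root, and lift
   children (open_tree_map): lightness and monotonicity force
   f (parent x) = parent (f x), and confluence applied to the edge {f x, b}
   lifts every child b of f x to a child of x.  If such a map F is not
   injective, take sibling vertices c1 != c2 with F c1 = F c2 of maximal
   depth; F is then injective on the subtrees below c1 and c2.  Folding the
   subtree of c2 onto that of c1 along equal images is an elementary light
   confluent epimorphism onto the tree with subtree c2 removed, and F factors
   through it by an open map on a smaller tree, so induction on the number of
   vertices concludes. *)

From mathcomp Require Import all_boot.
Set Implicit Arguments. Unset Strict Implicit. Unset Printing Implicit Defensive.

Section RootedTree.
Variable T : rtree.
Implicit Types x y : T.

Definition gpathb x y (s : seq T) : bool :=
  [&& s == x :: behead s, path (@adj T) x (behead s), last x (behead s) == y & uniq s].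

Lemma gpathbP x y s : reflect (is_gpath (@adj T) x y s) (gpathb x y s).
Proof.
apply: (iffP and4P) => [[/eqP-> pa /eqP la un]|[p [-> [pa [la un]]]]].
  by exists (behead s).
by split=> //; apply/eqP.
Qed.

Lemma gpathb_loop x s : gpathb x x s -> s = [:: x].
Proof.
case/and4P=> /eqP-> _ /eqP; case: (behead s) => //= a p <-.
by rewrite mem_last.
Qed.

Lemma gpathb_unique x y s1 s2 : gpathb x y s1 -> gpathb x y s2 -> s1 = s2.
Proof.
case: (eqVneq x y) => [<- /gpathb_loop-> /gpathb_loop-> //|/eqP nxy].
by move=> /gpathbP g1 /gpathbP g2; have [_] := tree_ax nxy; apply.
Qed.

Lemma exists_rpath x : exists s, gpathb (root T) x s.
Proof.
case: (eqVneq (root T) x) => [<-|/eqP nx]; first by exists [:: root T]; rewrite /gpathb /= !eqxx.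
by have [[s /gpathbP]] := tree_ax nx; exists s.
Qed.

Definition rpath x : seq T := xchoose (exists_rpath x).
Definition parent x : T := last (root T) (belast (root T) (behead (rpath x))).
Definition depth x : nat := (size (rpath x)).-1.
Definition subtree x : {set T} := [set y | x \in rpath y].

Lemma rpathP x : gpathb (root T) x (rpath x).
Proof. exact: xchooseP. Qed.

Lemma rpathE x s : gpathb (root T) x s -> rpath x = s.
Proof. exact: gpathb_unique (rpathP x). Qed.

Lemma rpath_root : rpath (root T) = [:: root T].
Proof. by apply: rpathE; rewrite /gpathb /= !eqxx. Qed.

Lemma head_rpath x : rpath x = root T :: behead (rpath x).
Proof. by case/and4P: (rpathP x) => /eqP. Qed.

Lemma last_rpath x : last (root T) (behead (rpath x)) = x.
Proof. by case/and4P: (rpathP x) => _ _ /eqP. Qed.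

Lemma rpath_uniq x : uniq (rpath x).
Proof. by case/and4P: (rpathP x). Qed.

Lemma rpath_inj : injective rpath.
Proof. by move=> x y E; rewrite -(last_rpath x) -(last_rpath y) E. Qed.

Lemma parent_root : parent (root T) = root T.
Proof. by rewrite /parent rpath_root. Qed.

Lemma rpath_parent x : x != root T -> rpath x = rcons (rpath (parent x)) x.
Proof.
move=> nx; case/and4P: (rpathP x); rewrite /parent.
case/lastP: (behead (rpath x)) => [|p y] /eqP E.
  by move=> _ /= /eqP xr; rewrite xr eqxx in nx.
rewrite last_rcons belast_rcons /= => pa /eqP yx; rewrite yx in E pa.
rewrite E -rcons_cons rcons_uniq => /andP[_ un].
suff -> : rpath (last (root T) p) = root T :: p by [].
apply: rpathE; apply/and4P; split=> //; first by move: pa; rewrite rcons_path => /andP[].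
Qed.

Lemma mem_rpath x : x \in rpath x.
Proof.
case: (eqVneq x (root T)) => [->|nx]; first by rewrite rpath_root mem_head.
by rewrite rpath_parent // mem_rcons mem_head.
Qed.

Lemma root_rpath x : root T \in rpath x.
Proof. by rewrite head_rpath mem_head. Qed.

Lemma mem_rpath_parent x y :
  (x \in rpath y) = (x == y) || (y != root T) && (x \in rpath (parent y)).
Proof.
case: (eqVneq y (root T)) => [->|ny]; first by rewrite rpath_root inE orbF.
by rewrite rpath_parent // mem_rcons inE.
Qed.

Lemma parent_rpath x : parent x \in rpath x.
Proof.
case: (eqVneq x (root T)) => [->|nx]; first by rewrite parent_root root_rpath.
by rewrite rpath_parent // mem_rcons inE mem_rpath orbT.
Qed.

Lemma depth_parent x : x != root T -> depth x = (depth (parent x)).+1.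
Proof. by move=> nx; rewrite /depth rpath_parent // size_rcons head_rpath. Qed.

Lemma depth_root : depth (root T) = 0.
Proof. by rewrite /depth rpath_root. Qed.

Lemma depth_eq0 x : (depth x == 0) = (x == root T).
Proof.
case: (eqVneq x (root T)) => [->|nx]; first by rewrite depth_root.
by rewrite depth_parent.
Qed.

Lemma parent_ind (P : T -> Prop) :
  P (root T) -> (forall x, x != root T -> P (parent x) -> P x) -> forall x, P x.
Proof.
move=> P0 PS x; move: {2}(depth x) (erefl (depth x)) => n.
elim: n x => [|n IH] x dx; first by move/eqP: dx; rewrite depth_eq0 => /eqP->.
have nx : x != root T by rewrite -depth_eq0 dx.
by apply: (PS _ nx); apply: IH; move: dx; rewrite (depth_parent nx) => -[].
Qed.

Lemma depth_rpath x y : x \in rpath y -> depth x <= depth y ?= iff (x == y).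
Proof.
elim/parent_ind: y => [|y ny IH]; first by rewrite rpath_root inE => /eqP->; apply/leqif_refl.
rewrite mem_rpath_parent ny /=; case: (eqVneq x y) => [->|nxy] /=; first by apply/leqif_refl.
move=> /IH[le _]; have lt : depth x < depth y by rewrite (depth_parent ny) ltnS.
by split; [exact: ltnW | rewrite ltn_eqF].
Qed.

Lemma rpath_depth_eq x y : x \in rpath y -> depth x = depth y -> x = y.
Proof. by move=> /depth_rpath[_ E] D; apply/eqP; rewrite -E D. Qed.

Lemma parent_neq x : x != root T -> parent x != x.
Proof.
move=> nx; apply: contraTneq (rpath_uniq x) => E.
by rewrite rpath_parent // rcons_uniq -{1}E mem_rpath.
Qed.

Lemma adj_parent x : adj x (parent x).
Proof.
case: (eqVneq x (root T)) => [->|nx]; first by rewrite parent_root adj_refl.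
case/and4P: (rpathP x) => _ + _ _; rewrite rpath_parent // head_rpath /=.
by rewrite rcons_path last_rpath adj_sym => /andP[].
Qed.

Lemma rpath_antisym x y : x \in rpath y -> y \in rpath x -> x = y.
Proof.
move=> xy yx; apply: (rpath_depth_eq xy).
by apply/eqP; rewrite eqn_leq (depth_rpath xy) (depth_rpath yx).
Qed.

Lemma gpathb_rcons r x y s : gpathb r x s -> adj x y -> y \notin s -> gpathb r y (rcons s y).
Proof.
case/and4P=> /eqP Es pa /eqP lx ux a ys; rewrite Es in ys ux *.
by rewrite /gpathb rcons_path lx pa a last_rcons -rcons_cons rcons_uniq ys ux !eqxx.
Qed.

Lemma parent_of_adj x y : adj x y -> y \notin rpath x -> parent y = x.
Proof.
move=> a yx; have ny : y != root T by apply: contraNneq yx => ->; exact: root_rpath.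
have /rpathE := gpathb_rcons (rpathP x) a yx.
by rewrite rpath_parent // => /eqP; rewrite eqseq_rcons eqxx andbT => /eqP /rpath_inj.
Qed.

Lemma adj_parentP x y : adj x y -> [\/ x = y, parent x = y | parent y = x].
Proof.
move=> a; case: (eqVneq x y) => [|nxy]; first by constructor 1.
case: (boolP (y \in rpath x)) => yx; last by constructor 3; apply: parent_of_adj.
have xy : x \notin rpath y by apply: contra_neqN nxy => xy; exact: rpath_antisym.
by constructor 2; apply: parent_of_adj; rewrite // adj_sym.
Qed.

Lemma adjE x y : adj x y = [|| x == y, parent x == y | parent y == x].
Proof.
apply/idP/idP; first by case/adj_parentP => ->; rewrite eqxx ?orbT.
by case/or3P => /eqP <-; rewrite ?adj_refl ?adj_parent // adj_sym adj_parent.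
Qed.

Lemma tleE x y : tle x y <-> x \in rpath y.
Proof.
split=> [[s [/gpathbP/rpathE-> //]]|xy].
by exists (rpath y); split=> //; apply/gpathbP/rpathP.
Qed.

Lemma subtree_self x : x \in subtree x.
Proof. by rewrite inE mem_rpath. Qed.

Lemma subtree_root x : x \in subtree (root T).
Proof. by rewrite inE root_rpath. Qed.

Lemma subtree_parent x y : y \in subtree x -> y != x -> y != root T /\ parent y \in subtree x.
Proof. by rewrite !inE mem_rpath_parent => /orP[/eqP->|/andP[]]; rewrite ?eqxx. Qed.

Lemma subtree_child x y : y != root T -> parent y \in subtree x -> y \in subtree x.
Proof. by move=> ny; rewrite !inE (mem_rpath_parent x y) ny orbC => ->. Qed.

Lemma subtree_nonroot x y : x != root T -> y \in subtree x -> y != root T.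
Proof. by move=> nx; rewrite inE; apply: contraTneq => ->; rewrite rpath_root inE. Qed.

Lemma subtree_depth_eq x y : y \in subtree x -> depth y = depth x -> y = x.
Proof. by rewrite inE => xy /esym /(rpath_depth_eq xy). Qed.

Lemma parent_notin_subtree x : x != root T -> parent x \notin subtree x.
Proof.
by move=> nx; rewrite inE; apply/negP => /depth_rpath[]; rewrite (depth_parent nx) ltnn.
Qed.

Lemma root_subtreeC x : x != root T -> root T \in ~: subtree x.
Proof. by move=> nx; rewrite in_setC; apply/negP => /(subtree_nonroot nx); rewrite eqxx. Qed.

Lemma subtreeC_parent x y : y \in ~: subtree x -> parent y \in ~: subtree x.
Proof.
rewrite !in_setC; apply: contra => py; have [yr|ny] := eqVneq y (root T); last exact: subtree_child.
by move: py; rewrite yr parent_root.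
Qed.

Lemma rpath_depth_inj w a b : a \in rpath w -> b \in rpath w -> depth a = depth b -> a = b.
Proof.
elim/parent_ind: w => [|w nw IH]; first by rewrite rpath_root !inE => /eqP-> /eqP->.
rewrite !(mem_rpath_parent _ w) nw /=.
case/orP=> [/eqP->|aw] /orP[/eqP->|bw] // D; last exact: IH.
- by have /depth_rpath[] := bw; rewrite -D (depth_parent nw) ltnn.
- by have /depth_rpath[] := aw; rewrite D (depth_parent nw) ltnn.
Qed.

Lemma subtree_disjoint x1 x2 :
  x1 != x2 -> depth x1 = depth x2 -> [disjoint subtree x1 & subtree x2].
Proof.
move=> n12 D; apply/pred0P => y /=; rewrite !inE; apply/andP => -[y1 y2].
by move/eqP: n12; apply; apply: rpath_depth_inj y1 y2 D.
Qed.

Lemma connected_parent_closed r (S : {set T}) : r \in S ->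
  (forall s, s \in S -> s != r -> s != root T /\ parent s \in S) -> connected S.
Proof.
move=> rS Sp.
suff no_split (B C : {set T}) : r \in B -> C != set0 -> [disjoint B & C] -> S = B :|: C ->
    (forall b c, b \in B -> c \in C -> ~~ adj b c) -> False.
  case=> B [C [nB nC dBC SBC nadj]].
  have := rS; rewrite SBC inE => /orP[rB|rC]; first exact: (no_split B C).
  apply: (no_split C B) => //; first by rewrite disjoint_sym.
    by rewrite setUC.
  by move=> c b cC bB; rewrite adj_sym nadj.
move=> rB /set0Pn[c0 c0C] dBC SBC nadj.
have [c cC cmin] := arg_minnP depth c0C.
have ncr : c != r by apply: contraTneq cC => ->; exact: negbT (disjointFr dBC rB).
have cS : c \in S by rewrite SBC; apply/setUP; right.
have [nc] := Sp c cS ncr.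
rewrite SBC inE => /orP[pB|pC]; first by have := nadj _ _ pB cC; rewrite adj_sym adj_parent.
by have := cmin _ pC; rewrite (depth_parent nc) ltnn.
Qed.

Lemma connected_parent_pair x : connected [set parent x; x].
Proof.
apply: (connected_parent_closed (r := parent x)); first by rewrite !inE eqxx.
move=> s; rewrite !inE => /orP[] /eqP-> npx; first by rewrite eqxx in npx.
split; last by rewrite eqxx.
by apply: contra_neq npx => xr; rewrite xr parent_root.
Qed.

Lemma component_adj_closed (A S : {set T}) x : x \in S -> S \subset A -> connected S ->
  (forall s w, s \in S -> w \in A -> adj s w -> w \in S) -> component A S.
Proof.
move=> xS SA cS Sadj; split=> // S' SS' S'A cS'.
apply/eqP; rewrite eqEsubset SS' andbT; apply/negPn/negP => /subsetPn[y yS' yS].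
apply: cS'; exists S, (S' :\: S); split.
- by apply/set0Pn; exists x.
- by apply/set0Pn; exists y; rewrite inE yS.
- by rewrite disjoint_sym disjoints_subset setDE subsetIr.
- by rewrite -{1}(setID S' S) (setIidPr SS').
- move=> s w sS; rewrite inE => /andP[wS wS']; apply: contraNN wS.
  exact: Sadj sS (subsetP S'A w wS').
Qed.

Lemma subtree_component x : x != root T -> component [set~ parent x] (subtree x).
Proof.
move=> nx; apply: (component_adj_closed (subtree_self x)).
- by apply/subsetP => y yx; rewrite !inE; apply: contraTneq yx => ->; apply: parent_notin_subtree.
- by apply: (connected_parent_closed (subtree_self x)) => s; apply: subtree_parent.
move=> s w sx; rewrite in_setC1 => nw /adj_parentP[<- //|sw|ws].
  case: (eqVneq s x) => [sx'|]; first by rewrite -sw sx' eqxx in nw.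
  by rewrite -sw => /(subtree_parent sx)[].
apply: subtree_child; last by rewrite ws.
by apply: contraTneq (subtree_nonroot nx sx) => wr; rewrite -ws wr parent_root eqxx.
Qed.

End RootedTree.

Section InducedTree.
Variables (T : rtree) (S : {set T}).
Hypothesis S_root : root T \in S.
Hypothesis S_parent : forall x, x \in S -> parent x \in S.

Definition induced_vtx : finType := {x : T | x \in S}.
Definition induced_adj : rel induced_vtx := relpre val (@adj T).
Definition induced_root : induced_vtx := exist _ (root T) S_root.

Lemma induced_adj_refl : reflexive induced_adj.
Proof. by move=> x; apply: adj_refl. Qed.

Lemma induced_adj_sym : symmetric induced_adj.
Proof. by move=> x y; apply: adj_sym. Qed.

Lemma is_gpath_val (x y : induced_vtx) s :
  is_gpath induced_adj x y s -> is_gpath (@adj T) (val x) (val y) (map val s).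
Proof.
case=> p [-> [pa [<- un]]]; exists (map val p).
by rewrite path_map last_map (map_inj_uniq val_inj).
Qed.

Lemma connect_induced_root (x : induced_vtx) : connect induced_adj induced_root x.
Proof.
case: x => x; elim/parent_ind: x => [|x nx IH] xS; first by rewrite (bool_irrelevance xS S_root).
apply: connect_trans (IH (S_parent xS)) (connect1 _).
by rewrite /induced_adj /= adj_sym adj_parent.
Qed.

Lemma induced_tree_ax (x y : induced_vtx) : x <> y ->
  (exists s, is_gpath induced_adj x y s) /\
  (forall s1 s2, is_gpath induced_adj x y s1 -> is_gpath induced_adj x y s2 -> s1 = s2).
Proof.
move=> nxy; split.
  have : connect induced_adj x y.
    apply: connect_trans (connect_induced_root y).
    by rewrite (sym_connect_sym induced_adj_sym) connect_induced_root.
  case/connectP => p pa ->; case: (shortenP pa) => p' pa' un _.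
  by exists (x :: p'), p'.
have nv : val x <> val y by move/val_inj.
move=> s1 s2 /is_gpath_val g1 /is_gpath_val g2; apply: (inj_map val_inj).
by have [_] := tree_ax nv; apply.
Qed.

Definition induced : rtree :=
  @RTree induced_vtx induced_adj induced_root induced_adj_refl induced_adj_sym induced_tree_ax.

Lemma rpath_induced (y : induced) : map val (rpath y) = rpath (val y).
Proof. by have /gpathbP/is_gpath_val/gpathbP/rpathE := rpathP y. Qed.

Lemma val_parent (y : induced) : val (parent y) = parent (val y).
Proof.
case: (eqVneq y (root induced)) => [->|ny]; first by rewrite !parent_root.
have nv : val y != root T by apply: contra ny => /eqP vr; apply/eqP/val_inj.
have := rpath_induced y; rewrite (rpath_parent ny) (rpath_parent nv) map_rcons rpath_induced.
by move/eqP; rewrite eqseq_rcons eqxx andbT => /eqP /rpath_inj.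
Qed.

Lemma mem_subtree_induced (x y : induced) : (y \in subtree x) = (val y \in subtree (val x)).
Proof. by rewrite !inE -rpath_induced (mem_map val_inj). Qed.

Lemma card_induced : #|induced| = #|S|.
Proof. exact: card_sig. Qed.

End InducedTree.

Section TreeMaps.
Variables (G H : rtree) (F : G -> H).
Hypothesis F_parent : {morph F : x / parent x}.
Hypothesis F_nonroot : forall x, x != root G -> F x != root H.

Lemma morph_root : F (root G) = root H.
Proof.
case: (eqVneq (F (root G)) (root H)) => // nr.
by have := parent_neq nr; rewrite -F_parent parent_root eqxx.
Qed.

Lemma rpath_morph x : rpath (F x) = map F (rpath x).
Proof.
elim/parent_ind: x => [|x nx IH]; first by rewrite morph_root !rpath_root /= morph_root.
by rewrite (rpath_parent (F_nonroot nx)) (rpath_parent nx) map_rcons -F_parent IH.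
Qed.

Lemma depth_morph x : depth (F x) = depth x.
Proof. by rewrite /depth rpath_morph size_map. Qed.

Lemma sibling_collision c a b : a \in subtree c -> b \in subtree c -> a != b -> F a = F b ->
  exists a' b', [/\ a' \in subtree c, a' != c, a' != b', F a' = F b' & parent a' = parent b'].
Proof.
elim/parent_ind: a b => [|a na IH] b ac bc nab Fab.
  have /eqP : depth b = 0 by rewrite -depth_morph -Fab depth_morph depth_root.
  by rewrite depth_eq0 => /eqP br; rewrite br eqxx in nab.
have dab : depth a = depth b by rewrite -depth_morph Fab depth_morph.
have nac : a != c by apply: contra_neq nab => ac'; rewrite ac' (subtree_depth_eq bc) // -ac' dab.
have nbc : b != c by apply: contra_neq nab => bc'; rewrite bc' (subtree_depth_eq ac) // -bc' dab.
have [[_ pac] [nb pbc]] := (subtree_parent ac nac, subtree_parent bc nbc).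
have [pab|npab] := eqVneq (parent a) (parent b); first by exists a, b.
by apply: IH pac pbc npab _; rewrite !F_parent Fab.
Qed.

Lemma deepest_sibling_collision : ~~ injectiveb F ->
  exists c1 c2, [/\ c1 != c2, c1 != root G, c2 != root G, parent c1 = parent c2 & F c1 = F c2]
    /\ {in subtree c1 &, injective F} /\ {in subtree c2 &, injective F}.
Proof.
case/injectivePn => x [y nxy Fxy].
have [a [b [_ na nab Fab pab]]] := sibling_collision (subtree_root x) (subtree_root y) nxy Fxy.
pose P (p : G * G) := [&& p.1 != root G, p.1 != p.2, F p.1 == F p.2 & parent p.1 == parent p.2].
have Pab : P (a, b) by rewrite /P /= na nab Fab pab !eqxx.
have [[c1 c2] /and4P[/= n1 n12 /eqP F12 /eqP p12] cmax] := arg_maxnP (fun p => depth p.1) Pab.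
have n2 : c2 != root G.
  by apply: contra_neq (F_nonroot n1) => c2r; rewrite F12 c2r morph_root.
have inj c : depth c = depth c1 -> c != root G -> {in subtree c &, injective F}.
  move=> dc nc u v uc vc Fuv; apply/eqP/negPn/negP => nuv.
  have [a' [b' [a'c na'c na'b' Fa'b' pa'b']]] := sibling_collision uc vc nuv Fuv.
  have := cmax (a', b'); rewrite /P /= (subtree_nonroot nc a'c) na'b' Fa'b' pa'b' !eqxx => /(_ isT).
  have lt : depth c1 < depth a'.
    have /depth_rpath[le] : c \in rpath a' by move: a'c; rewrite inE.
    by rewrite -dc ltn_neqAle le andbT => ->; rewrite eq_sym.
  by move=> /(leq_trans lt); rewrite ltnn.
exists c1, c2; split=> //; split; apply: inj => //.
by rewrite (depth_parent n1) (depth_parent n2) p12.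
Qed.

Lemma epimorphism_of_parent_morph : (forall w, exists v, F v = w) -> epimorphism F.
Proof.
move=> Fsurj; split=> //.
- by move=> x y; rewrite !adjE => /or3P[] /eqP<-; rewrite ?F_parent eqxx ?orbT.
- move=> a b; rewrite adjE => /or3P[] /eqP<-.
  + by have [x <-] := Fsurj a; exists x, x; rewrite adj_refl.
  + by have [x <-] := Fsurj a; exists x, (parent x); rewrite adj_parent F_parent.
  + by have [x <-] := Fsurj b; exists (parent x), x; rewrite adj_sym adj_parent F_parent.
- exact: morph_root.
- by move=> x y /tleE xy; apply/tleE; rewrite rpath_morph map_f.
Qed.

End TreeMaps.

Definition open_tree_map (G H : rtree) (F : G -> H) : Prop :=
  [/\ {morph F : x / parent x},
      (forall x, x != root G -> F x != root H) &
      (forall x b, b != root H -> parent b = F x -> exists2 y, parent y = x & F y = b)].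

Section OpenTreeMap.
Variables (G H : rtree) (F : G -> H).
Hypothesis F_open : open_tree_map F.

Lemma image_subtree c : F @: subtree c = subtree (F c).
Proof.
have [F_parent F_nonroot F_lift] := F_open.
apply/setP => b; apply/imsetP/idP => [[y yc ->]|].
  by move: yc; rewrite !inE (rpath_morph F_parent F_nonroot); apply: map_f.
elim/parent_ind: b => [|b nb IH] bFc.
  case: (eqVneq c (root G)) => [->|/F_nonroot/negbTE nr].
    by exists (root G); rewrite ?subtree_self ?(morph_root F_parent).
  by move: bFc; rewrite inE rpath_root inE nr.
case: (eqVneq b (F c)) => [->|nbc]; first by exists c; rewrite ?subtree_self.
have [_ /IH[x xc Fx]] := subtree_parent bFc nbc.
have [y yx Fy] := F_lift _ _ nb Fx.
exists y => //; apply: subtree_child; last by rewrite yx.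
by apply: contraNneq nb => yr; rewrite -Fy yr (morph_root F_parent).
Qed.

Lemma open_surjective w : exists v, F v = w.
Proof.
have [F_parent _ _] := F_open.
have : w \in F @: subtree (root G) by rewrite image_subtree (morph_root F_parent) subtree_root.
by case/imsetP => v _ ->; exists v.
Qed.

Lemma open_epimorphism : epimorphism F.
Proof.
have [F_parent F_nonroot _] := F_open.
exact: epimorphism_of_parent_morph F_parent F_nonroot open_surjective.
Qed.

Lemma open_card_leq : #|H| <= #|G|.
Proof.
rewrite -[#|G|]cardsT; apply: leq_trans (leq_imset_card F _); apply/subset_leq_card/subsetP => w _.
by have [v <-] := open_surjective w; apply: imset_f.
Qed.

End OpenTreeMap.

Section LightConfluent.
Variables (G H : rtree) (f : G -> H).
Hypothesis f_epi : epimorphism f.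
Hypothesis f_light : light f.

Lemma lepi_parent_neq x : x != root G -> f (parent x) != f x.
Proof.
move=> nx; apply/eqP => E.
by have := f_light (elimN eqP (parent_neq nx)) E; rewrite adj_sym adj_parent.
Qed.

Lemma lepi_parent : {morph f : x / parent x}.
Proof.
have [f_adj _ _ f_root f_tle] := f_epi; move=> x.
case: (eqVneq x (root G)) => [->|nx]; first by rewrite parent_root f_root parent_root.
have px : f (parent x) \in rpath (f x) by apply/tleE/f_tle/tleE/parent_rpath.
have : adj (f (parent x)) (f x) by apply: f_adj; rewrite adj_sym adj_parent.
case/adj_parentP => [E|E|//]; first by have := lepi_parent_neq nx; rewrite E eqxx.
have xp : f x \in rpath (f (parent x)) by rewrite -E parent_rpath.
by have := lepi_parent_neq nx; rewrite (rpath_antisym px xp) eqxx.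
Qed.

Lemma lepi_nonroot x : x != root G -> f x != root H.
Proof.
move=> nx; apply: contra (lepi_parent_neq nx) => /eqP fx.
by rewrite lepi_parent fx parent_root.
Qed.

Lemma component_preimage_edge x b : b != root H -> parent b = f x ->
  component (f @^-1: [set f x; b])
            [set y | (f y \in [set f x; b]) && ((y == x) || (parent y == x))].
Proof.
move=> nb bx; set Q := [set f x; b]; set S := [set y | _].
have f_depth := depth_morph lepi_parent lepi_nonroot.
have depthQ w : f w \in Q -> depth x <= depth w <= (depth x).+1.
  rewrite !inE -(f_depth w) => /orP[] /eqP->; rewrite ?f_depth ?leqnn ?leqnSn //.
  by rewrite (depth_parent nb) bx f_depth leqnSn leqnn.
have xS : x \in S by rewrite !inE !eqxx.
apply: (component_adj_closed xS).
- by apply/subsetP => y; rewrite !inE => /andP[].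
- apply: (connected_parent_closed xS) => s.
  rewrite inE => /andP[_ /orP[/eqP-> /eqP //|/eqP sx nsx]].
  by rewrite sx; split=> //; apply: contraNneq nsx => sr; rewrite -sx sr parent_root.
move=> s w; rewrite inE => /andP[_ sx]; rewrite inE => fw; rewrite inE fw /=.
have [->|nsx] := eqVneq s x.
  rewrite adjE => /or3P[/eqP<-|/eqP xw|/eqP->]; rewrite ?eqxx ?orbT //.
  have [xr|nx] := eqVneq x (root G); first by rewrite -xw xr parent_root eqxx.
  by have := depthQ w fw; rewrite -xw (depth_parent nx) ltnn.
move: sx; rewrite (negbTE nsx) /= => /eqP sx.
have ns : s != root G by apply: contraNneq nsx => sr; rewrite -sx sr parent_root.
rewrite adjE => /or3P[/eqP<-|/eqP<-|/eqP ws]; rewrite ?sx ?eqxx ?orbT //.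
have nw : w != root G by apply: contraNneq ns => wr; rewrite -ws wr parent_root.
by have := depthQ w fw; rewrite (depth_parent nw) ws (depth_parent ns) sx ltnn andbF.
Qed.

Hypothesis f_confluent : confluent f.

Lemma lc_lift_child x b : b != root H -> parent b = f x -> exists2 y, parent y = x & f y = b.
Proof.
move=> nb bx; have cQ : connected [set f x; b] by rewrite -bx; apply: connected_parent_pair.
have /setP/(_ b) := f_confluent cQ (component_preimage_edge nb bx).
rewrite !inE eqxx orbT => /imsetP[y]; rewrite inE => /andP[_ /orP[/eqP-> fxb|/eqP yx ->]].
  by have := parent_neq nb; rewrite bx fxb eqxx.
by exists y.
Qed.

End LightConfluent.

Lemma light_confluent_open (G H : rtree) (f : G -> H) :
  epimorphism f -> light f -> confluent f -> open_tree_map f.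
Proof.
by move=> epi lf cf; split; [apply: lepi_parent | apply: lepi_nonroot | apply: lc_lift_child].
Qed.

Lemma open_tree_map_factor (G K H : rtree) (e : G -> K) (g : K -> H) (F : G -> H) :
  {morph e : x / parent x} -> (forall y, exists x, e x = y) -> (forall x, F x = g (e x)) ->
  open_tree_map F -> open_tree_map g.
Proof.
move=> e_parent e_surj Fge [F_parent F_nonroot F_lift]; split.
- by move=> y; have [x <-] := e_surj y; rewrite -e_parent -!Fge F_parent.
- move=> y; have [x <-] := e_surj y; rewrite -Fge => nex; apply: F_nonroot.
  by apply: contraNneq nex => ->; rewrite (morph_root e_parent).
- move=> y b nb; have [x <-] := e_surj y; rewrite -Fge => /(F_lift _ _ nb)[z zx Fz].
  by exists (e z); rewrite -?Fge // -e_parent zx.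
Qed.

Section Siblings.
Variables (G : rtree) (c1 c2 : G).
Hypotheses (c12 : c1 != c2) (c1_nonroot : c1 != root G) (c2_nonroot : c2 != root G).
Hypothesis parent12 : parent c1 = parent c2.

Local Notation D1 := (subtree c1).
Local Notation D2 := (subtree c2).

Lemma subtree_siblings_disjoint : [disjoint D1 & D2].
Proof.
by apply: subtree_disjoint; rewrite // (depth_parent c1_nonroot) (depth_parent c2_nonroot) parent12.
Qed.

Lemma notin_subtree2 x : x \in D1 -> x \notin D2.
Proof. by move=> x1; rewrite (disjointFr subtree_siblings_disjoint x1). Qed.

Definition pruned : rtree := induced (root_subtreeC c2_nonroot) (@subtreeC_parent G c2).

Lemma elementary_lc_siblings (H : rtree) (F : G -> H) :
  epimorphism F -> {morph F : x / parent x} ->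
  {in D1 &, injective F} -> {in D2 &, injective F} ->
  F @: D1 = subtree (F c1) -> F @: D2 = subtree (F c1) -> F c1 != root H ->
  {in ~: (D1 :|: D2) &, injective F} -> elementary_lc F.
Proof.
move=> epi F_parent inj1 inj2 im1 im2 nF1 inj12; split=> //.
exists (parent c1), D1, D2; split; first exact: subtree_component.
split; first by rewrite parent12; exact: subtree_component.
split.
  move=> E; have := disjointFr subtree_siblings_disjoint (subtree_self c1).
  by rewrite -E subtree_self.
do 3!split=> //; first by rewrite im1 im2.
by split=> //; rewrite im1 F_parent; apply: subtree_component.
Qed.

Section Fold.
Variables (H : rtree) (F : G -> H).
Hypothesis F_open : open_tree_map F.
Hypothesis F12 : F c1 = F c2.
Hypotheses (F_inj1 : {in D1 &, injective F}) (F_inj2 : {in D2 &, injective F}).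

Let F_parent : {morph F : x / parent x}.
Proof. by case: F_open. Qed.

Definition pruned_restriction (y : pruned) : H := F (val y).

Definition mirror x : G := odflt x [pick w in D1 | F w == F x].

Lemma mirrorP x : x \in D2 -> mirror x \in D1 /\ F (mirror x) = F x.
Proof.
move=> x2; rewrite /mirror; case: pickP => [w /andP[w1 /eqP //]|none].
have : F x \in F @: D1 by rewrite image_subtree // F12 -image_subtree // imset_f.
by case/imsetP => w w1 Fw; have := none w; rewrite w1 Fw eqxx.
Qed.

Lemma mirror_eq x w : x \in D2 -> w \in D1 -> F w = F x -> mirror x = w.
Proof. by move=> x2 w1 Fw; have [m1 Fm] := mirrorP x2; apply: F_inj1; rewrite // Fm Fw. Qed.

Definition fold_fun x : G := if x \in D2 then mirror x else x.

Lemma fold_fun_id x : x \notin D2 -> fold_fun x = x.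
Proof. by rewrite /fold_fun => /negbTE->. Qed.

Lemma fold_funC x : fold_fun x \in ~: D2.
Proof.
rewrite /fold_fun in_setC; case: ifP => [x2|/negbT //].
by have [m1 _] := mirrorP x2; apply: notin_subtree2.
Qed.

Lemma F_fold_fun x : F (fold_fun x) = F x.
Proof. by rewrite /fold_fun; case: ifP => // x2; have [_ ->] := mirrorP x2. Qed.

Lemma fold_fun_parent x : fold_fun (parent x) = parent (fold_fun x).
Proof.
have [x2|xD2] := boolP (x \in D2); last first.
  by rewrite !fold_fun_id // -in_setC subtreeC_parent // in_setC.
have [->|nxc] := eqVneq x c2.
  rewrite fold_fun_id ?parent_notin_subtree // /fold_fun subtree_self.
  by rewrite (mirror_eq (subtree_self c2) (subtree_self c1) F12) parent12.
have [m1 Fm] := mirrorP x2; have [_ px2] := subtree_parent x2 nxc.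
have nmc : mirror x != c1.
  by apply: contra_neq nxc => mc; apply: F_inj2; rewrite ?subtree_self // -Fm mc F12.
have [_ pm1] := subtree_parent m1 nmc.
by rewrite /fold_fun x2 px2; apply: mirror_eq; rewrite // !F_parent Fm.
Qed.

Definition fold x : pruned := exist _ (fold_fun x) (fold_funC x).

Lemma fold_valK : cancel val fold.
Proof. by move=> y; apply: val_inj; rewrite /= fold_fun_id // -in_setC (valP y). Qed.

Lemma fold_parent : {morph fold : x / parent x}.
Proof. by move=> x; apply: val_inj; rewrite val_parent /= fold_fun_parent. Qed.

Lemma fold_nonroot x : x != root G -> fold x != root pruned.
Proof.
move=> nx; apply: contra_neq (_ : fold_fun x != root G) => [/(congr1 val) //|].
rewrite /fold_fun; case: ifP => // x2.
by have [m1 _] := mirrorP x2; apply: subtree_nonroot m1.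
Qed.

Lemma fold_factor x : F x = pruned_restriction (fold x).
Proof. by rewrite /pruned_restriction F_fold_fun. Qed.

Lemma open_pruned : open_tree_map pruned_restriction.
Proof.
apply: (open_tree_map_factor fold_parent _ fold_factor F_open) => y.
by exists (val y); rewrite fold_valK.
Qed.

Lemma card_pruned : #|pruned| < #|G|.
Proof.
rewrite card_induced -(cardsC D2) -[X in X < _]add0n ltn_add2r.
by apply/card_gt0P; exists c2; apply: subtree_self.
Qed.

Lemma fold_inj_out : {in ~: D2 &, injective fold}.
Proof. by move=> x y; rewrite !in_setC => x2 y2 /(congr1 val) /=; rewrite !fold_fun_id. Qed.

Lemma image_fold_subtree1 : fold @: D1 = subtree (fold c1).
Proof.
apply/setP => y; rewrite mem_subtree_induced /= fold_fun_id ?notin_subtree2 ?subtree_self //.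
apply/imsetP/idP => [[x x1 ->]|y1]; first by rewrite /= fold_fun_id ?notin_subtree2.
by exists (val y); rewrite ?fold_valK.
Qed.

Lemma image_fold_subtree2 : fold @: D2 = subtree (fold c1).
Proof.
apply/setP => y; rewrite mem_subtree_induced /= fold_fun_id ?notin_subtree2 ?subtree_self //.
apply/imsetP/idP => [[x x2 ->]|y1]; first by rewrite /= /fold_fun x2; have [] := mirrorP x2.
have : F (val y) \in F @: D2 by rewrite image_subtree // -F12 -image_subtree // imset_f.
case/imsetP => x x2 Fx; exists x => //; apply: val_inj.
by rewrite /= /fold_fun x2 (mirror_eq x2 y1 Fx).
Qed.

Lemma elementary_fold : elementary_lc fold.
Proof.
apply: elementary_lc_siblings.
- apply: epimorphism_of_parent_morph fold_parent fold_nonroot _.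
  by move=> y; exists (val y); apply: fold_valK.
- exact: fold_parent.
- by move=> x y x1 y1; apply: fold_inj_out; rewrite in_setC notin_subtree2.
- move=> x y x2 y2 /(congr1 pruned_restriction).
  by rewrite -!fold_factor; apply: F_inj2.
- exact: image_fold_subtree1.
- exact: image_fold_subtree2.
- exact: fold_nonroot.
- move=> x y; rewrite !in_setC !in_setU !negb_or => /andP[_ x2] /andP[_ y2].
  by apply: fold_inj_out; rewrite in_setC.
Qed.

Lemma elementary_of_bijective_pruned : bijective pruned_restriction -> elementary_lc F.
Proof.
move=> /bij_inj g_inj; have [_ F_nonroot _] := F_open.
apply: elementary_lc_siblings => //.
- exact: open_epimorphism.
- exact: image_subtree.
- by rewrite F12; apply: image_subtree.
- exact: F_nonroot.
move=> x y; rewrite !in_setC !in_setU !negb_or => /andP[_ x2] /andP[_ y2].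
move=> Fxy; have /(congr1 val) : fold x = fold y by apply: g_inj; rewrite -!fold_factor.
by rewrite /= !fold_fun_id.
Qed.

Lemma elem_comp_fold : bijective pruned_restriction \/ elem_comp pruned_restriction ->
  elem_comp F.
Proof.
case=> [/elementary_of_bijective_pruned/ec_one // | g_comp].
exact: ec_step elementary_fold g_comp fold_factor.
Qed.

End Fold.

End Siblings.

Lemma open_tree_map_decomposition n (G H : rtree) (F : G -> H) :
  #|G| < n -> open_tree_map F -> bijective F \/ elem_comp F.
Proof.
elim: n G H F => // n IH G H F cardG F_open; have [F_parent F_nonroot _] := F_open.
have [/injectiveP F_inj | F_ninj] := boolP (injectiveb F).
  by left; apply: inj_card_bij F_inj (open_card_leq F_open).
have [c1 [c2 [[c12 n1 n2 p12 F12] [inj1 inj2]]]] :=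
  deepest_sibling_collision F_parent F_nonroot F_ninj.
right; apply: (elem_comp_fold c12 n1 p12 F_open F12 inj1 inj2).
exact: IH (leq_trans (card_pruned n2) cardG) (open_pruned c12 n1 n2 p12 F_open F12 inj1 inj2).
Qed.

Theorem corollary8p15 (G H : rtree) (f : G -> H) :
  epimorphism f -> light f -> confluent f ->
  (bijective f \/ elem_comp f).
Proof.
move=> f_epi f_light f_confluent.
exact: open_tree_map_decomposition (ltnSn _) (light_confluent_open f_epi f_light f_confluent).
Qed.
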